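(* Let $N\ge3$ and let $T_{ab}$ be a rank-2 tensor. The following are equivalent: (i) $T_{ac}T_b{}^c=fg_{ab}$ for some real $f\neq0$; (ii) for some $f>0$, both $T_{ac}T_b{}^c=fg_{ab}$ and $T_{ca}T^c{}_b=fg_{ab}$; (iii) $T_a{}^b$ defines a non-singular null-cone preserving map. Moreover, in this case $T_a{}^b$ is bi-preserving, $L_a{}^b=T_a{}^b/\sqrt f$ is a Lorentz transformation, and $T_{ab}\in\mathcal{DP}\cup-\mathcal{DP}$.
   Context: Lorentzian metric $g_{ab}$ of signature $(+,-,\dots,-)$ with a time orientation; null: $v\ne0$, $v_av^a=0$; causal: $v\neq0$, $v_av^a\ge0$. $T_a{}^b$ is a null-cone preserving map if $k^aT_a{}^b$ is null or zero for every null $k$, bi-preserving if also $T_a{}^bk_b$ is null or zero for every null $k$, non-singular if $\det(T_a{}^b)\neq0$. A Lorentz transformation is $L_a{}^b$ with $g_{cd}L_a{}^cL_b{}^d=g_{ab}$. $\mathcal{DP}$ is the set of rank-2 tensors $T_{ab}$ with $T_{ab}u^av^b\ge0$ for all causal future-pointing $u,v$; $-\mathcal{DP}=\{T:-T\in\mathcal{DP}\}$. *)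

From HB Require Import structures.
From mathcomp Require Import all_boot all_order all_algebra.
From mathcomp Require Import reals.
Set Implicit Arguments. Unset Strict Implicit. Unset Printing Implicit Defensive.
Import Order.TTheory GRing.Theory Num.Theory.
Local Open Scope ring_scope.

(* Conventions: a (contravariant) vector v^a and a covector w_a are both
   represented as row vectors 'rV[R]_N in a fixed basis.  A rank-2 tensor
   with lower indices T_ab is a matrix T with T a b = T_ab.  The metric g_ab
   is the matrix G; g^ab is invmx G.  The mixed tensor T_a^b = T_ac g^cb is
   the matrix T *m invmx G. *)

Section Defs.
Variables (R : realType) (N : nat).

Definition eta_mx : 'M[R]_N :=
  diag_mx (\row_(i < N) (if (i : nat) == 0%N then 1 else -1)).

Definition lorentzian (G : 'M[R]_N) : Prop :=
  G^T = G /\ exists P : 'M[R]_N, P \in unitmx /\ P^T *m G *m P = eta_mx.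

Definition gdot (G : 'M[R]_N) (u v : 'rV[R]_N) : R := (u *m G *m v^T) 0 0.

Definition gdot_co (G : 'M[R]_N) (w z : 'rV[R]_N) : R := (w *m invmx G *m z^T) 0 0.

Definition null (G : 'M[R]_N) (v : 'rV[R]_N) : Prop := v != 0 /\ gdot G v v = 0.
Definition causal (G : 'M[R]_N) (v : 'rV[R]_N) : Prop := v != 0 /\ 0 <= gdot G v v.
Definition null_co (G : 'M[R]_N) (w : 'rV[R]_N) : Prop := w != 0 /\ gdot_co G w w = 0.

Definition lower (G : 'M[R]_N) (k : 'rV[R]_N) : 'rV[R]_N := k *m G^T.

Definition mixed (G T : 'M[R]_N) : 'M[R]_N := T *m invmx G.

Definition null_cone_preserving (G M : 'M[R]_N) : Prop :=
  forall k, null G k -> k *m M = 0 \/ null G (k *m M).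

Definition bi_preserving (G M : 'M[R]_N) : Prop :=
  null_cone_preserving G M /\
  forall k, null G k ->
    let w := (M *m (lower G k)^T)^T in w = 0 \/ null_co G w.

Definition nonsingular (M : 'M[R]_N) : Prop := \det M != 0.

Definition lorentz_transformation (G L : 'M[R]_N) : Prop :=
  L *m G *m L^T = G.

(* time orientation given by a timelike vector tau: a causal v is
   future-pointing iff g(tau, v) > 0 *)
Definition future_pointing (G : 'M[R]_N) (tau v : 'rV[R]_N) : Prop :=
  causal G v /\ 0 < gdot G tau v.

Definition DP (G : 'M[R]_N) (tau : 'rV[R]_N) (T : 'M[R]_N) : Prop :=
  forall u v, future_pointing G tau u -> future_pointing G tau v ->
    0 <= (u *m T *m v^T) 0 0.

End Defs.

(* Work in an orthonormal frame P of G, i.e. P^T G P = diag(1,-1,...,-1), and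
   write t(v) for the time coordinate of v in that frame.  A vector with t = 0
   is spacelike or zero; applied to t(y) x - t(x) y this gives the reverse
   Cauchy-Schwarz type inequality that controls everything else.  A symmetric
   form vanishing on the null cone is a multiple of the metric, so a
   non-singular null-cone preserving map is conformal: M G M^T = f G.  The
   factor is positive because for N >= 3 the image of two orthonormal
   spacelike frame vectors cannot consist of two orthogonal timelike vectors.
   Finally, a conformal map with f > 0 preserves or reverses time orientation
   as a whole, which is the dichotomy T in DP or -T in DP. *)

From HB Require Import structures.
From mathcomp Require Import all_boot all_order all_algebra.
From mathcomp Require Import reals ring lra.
Import Order.TTheory GRing.Theory Num.Theory.
Set Implicit Arguments. Unset Strict Implicit. Unset Printing Implicit Defensive.
Local Open Scope ring_scope.

Section Bilinear.
Variables (R : realType) (N : nat).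
Implicit Types (A X : 'M[R]_N) (u v w : 'rV[R]_N).

Lemma gdotDl A u v w : gdot A (u + v) w = gdot A u w + gdot A v w.
Proof. by rewrite /gdot !mulmxDl mxE. Qed.

Lemma gdotDr A u v w : gdot A w (u + v) = gdot A w u + gdot A w v.
Proof. by rewrite /gdot linearD /= mulmxDr mxE. Qed.

Lemma gdotZl A (a : R) u w : gdot A (a *: u) w = a * gdot A u w.
Proof. by rewrite /gdot -!scalemxAl mxE. Qed.

Lemma gdotZr A (a : R) u w : gdot A w (a *: u) = a * gdot A w u.
Proof. by rewrite /gdot linearZ /= -scalemxAr mxE. Qed.

Lemma gdot0l A w : gdot A 0 w = 0.
Proof. by rewrite /gdot !mul0mx mxE. Qed.

Lemma gdotC A u v : A^T = A -> gdot A u v = gdot A v u.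
Proof.
move=> symA; rewrite /gdot -[in RHS](trmxK (v *m A *m u^T)) [RHS]mxE.
by rewrite !trmx_mul trmxK symA mulmxA.
Qed.

Lemma gdot_mulmx A X u v : gdot A (u *m X) (v *m X) = gdot (X *m A *m X^T) u v.
Proof. by rewrite /gdot trmx_mul !mulmxA. Qed.

Lemma gdot_scalemx A (a : R) u v : gdot (a *: A) u v = a * gdot A u v.
Proof. by rewrite /gdot -scalemxAr -scalemxAl mxE. Qed.

Lemma gdot_delta A p q : gdot A (delta_mx 0 p) (delta_mx 0 q) = A p q.
Proof. by rewrite /gdot -rowE trmx_delta -colE !mxE. Qed.

Lemma gdot_conformal A X (f : R) u v :
  X *m A *m X^T = f *: A -> gdot A (u *m X) (v *m X) = f * gdot A u v.
Proof. by move=> confX; rewrite gdot_mulmx confX gdot_scalemx. Qed.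

End Bilinear.

Section Conformal.
Variables (R : realType) (N : nat).
Implicit Types (A G M T : 'M[R]_N).

Lemma conformal_unitmx G M (f : R) :
  G \in unitmx -> f != 0 -> M *m G *m M^T = f *: G -> M \in unitmx.
Proof.
move=> unitG f_neq0 confM.
have : M *m (f^-1 *: (G *m M^T *m invmx G)) = 1%:M.
  by rewrite -scalemxAr !mulmxA confM -scalemxAl mulmxV // scalerA mulVf // scale1r.
by case/mulmx1_unit.
Qed.

Lemma conformal_trmx A M (f : R) :
  A \in unitmx -> f != 0 -> M *m invmx A *m M^T = f *: A ->
  M^T *m invmx A *m M = f *: A.
Proof.
move=> unitA f_neq0 confM; pose Y := invmx A *m M^T *m invmx A.
have /mulmx1C YM : M *m (f^-1 *: Y) = 1%:M.
  by rewrite -scalemxAr /Y !mulmxA confM -scalemxAl mulmxV // scalerA mulVf // scale1r.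
have {}YM : Y *m M = f%:M.
  by rewrite -scalemx1 -YM -scalemxAl scalerA mulfV // scale1r.
rewrite -[LHS](mulKVmx unitA).
have -> : invmx A *m (M^T *m invmx A *m M) = Y *m M by rewrite /Y !mulmxA.
by rewrite YM mul_mx_scalar.
Qed.

Lemma mixed_conformal G T :
  G^T = G -> G \in unitmx ->
  mixed G T *m G *m (mixed G T)^T = T *m invmx G *m T^T.
Proof.
by move=> symG unitG; rewrite /mixed trmx_mul trmx_inv symG mulmxKV // mulmxA.
Qed.

Lemma conformal_null_cone_preserving G M (f : R) :
  G \in unitmx -> f != 0 -> M *m G *m M^T = f *: G ->
  nonsingular M /\ null_cone_preserving G M.
Proof.
move=> unitG f_neq0 confM; have unitM := conformal_unitmx unitG f_neq0 confM.
split; first by move: unitM; rewrite unitmxE unitfE.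
move=> k [k_neq0 kk]; right; split; last by rewrite (gdot_conformal _ _ confM) kk mulr0.
by apply: contra k_neq0 => /eqP kM0; rewrite -(mulmxK unitM k) kM0 mul0mx.
Qed.

Lemma mixed_bi_preserving G T (f : R) :
  G^T = G -> G \in unitmx -> f != 0 -> T *m invmx G *m T^T = f *: G ->
  bi_preserving G (mixed G T).
Proof.
move=> symG unitG f_neq0 confT; set M := mixed G T.
have confM : M *m G *m M^T = f *: G by rewrite mixed_conformal.
split; first by case: (conformal_null_cone_preserving unitG f_neq0 confM).
have GMt : G *m M^T = T^T by rewrite /M /mixed trmx_mul trmx_inv symG mulKVmx.
have unitTt : T^T \in unitmx.
  by rewrite -GMt unitmx_mul unitG unitmx_tr (conformal_unitmx unitG f_neq0 confM).
move=> k [k_neq0 kk] /=; right.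
rewrite (_ : (M *m _)^T = k *m T^T); last first.
  by rewrite /lower trmx_mul trmxK symG -mulmxA GMt.
split; first by apply: contra k_neq0 => /eqP kT0; rewrite -(mulmxK unitTt k) kT0 mul0mx.
rewrite /gdot_co -/(gdot _ _ _) gdot_mulmx trmxK (conformal_trmx unitG f_neq0 confT).
by rewrite gdot_scalemx kk mulr0.
Qed.

Lemma scaled_lorentz_transformation G M (f : R) :
  0 < f -> M *m G *m M^T = f *: G ->
  lorentz_transformation G ((Num.sqrt f)^-1 *: M).
Proof.
move=> f_gt0 confM; rewrite /lorentz_transformation linearZ /= -scalemxAl.
rewrite -scalemxAr -scalemxAl confM !scalerA.
have sqrt_neq0 : Num.sqrt f != 0 by rewrite sqrtr_eq0 -ltNge.
by rewrite -{3}(sqr_sqrtr (ltW f_gt0)) expr2 -invfM mulVf ?mulf_neq0 // scale1r.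
Qed.

End Conformal.

Lemma eta_mx_entry (R : realType) n (p q : 'I_n.+1) :
  eta_mx R n.+1 p q = if p == q then (if p == ord0 then 1 else -1) else 0.
Proof. by rewrite !mxE; case: (p =P q) => [->|_]; rewrite ?mulr1n ?mulr0n. Qed.

Lemma gdot_eta_self (R : realType) n (a : 'rV[R]_n.+1) :
  gdot (eta_mx R n.+1) a a = a 0 ord0 ^+ 2 - \sum_(i < n) a 0 (lift ord0 i) ^+ 2.
Proof.
rewrite /gdot /eta_mx mul_mx_diag mxE big_ord_recl !mxE /= mulr1 -expr2.
congr (_ + _); rewrite -sumrN; apply: eq_bigr => i _; rewrite !mxE /=.
by rewrite mulrN1 mulNr expr2.
Qed.

Lemma eta_mx_unit (R : realType) n : eta_mx R n.+1 \in unitmx.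
Proof.
suff /mulmx1_unit[] : eta_mx R n.+1 *m eta_mx R n.+1 = 1%:M by [].
apply/matrixP => i j; rewrite {1}/eta_mx mul_mx_diag !mxE.
case: (i =P j) => [->|_]; last by rewrite !mulr0n mul0r.
by rewrite !mulr1n; case: ifP => _; rewrite ?mulr1 ?mulrNN ?mulr1.
Qed.

Lemma eta_null_form (R : realType) n (B : 'M[R]_n.+1) :
  B^T = B -> (forall a, gdot (eta_mx R n.+1) a a = 0 -> gdot B a a = 0) ->
  B = B ord0 ord0 *: eta_mx R n.+1.
Proof.
move=> symB nullB; have symBE i j : B j i = B i j by rewrite -{1}symB mxE.
pose e (p : 'I_n.+1) : 'rV[R]_n.+1 := delta_mx 0 p.
have space0 i : i != ord0 -> B ord0 i = 0 /\ B i i = - B ord0 ord0.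
  move=> /negbTE i0; have := nullB (e ord0 + e i); have := nullB (e ord0 - e i).
  rewrite -scaleN1r !(gdotDl, gdotDr, gdotZl, gdotZr, gdot_delta, eta_mx_entry).
  rewrite !eqxx i0 eq_sym i0 (symBE ord0 i) => /(_ ltac:(lra)) + /(_ ltac:(lra)).
  by move=> *; split; lra.
have space_offdiag i j : i != ord0 -> j != ord0 -> i != j -> B i j = 0.
  move=> i0 j0 ij; have [Bi0 Bii] := space0 i i0; have [Bj0 Bjj] := space0 j j0.
  move: i0 j0 ij => /negbTE i0 /negbTE j0 /negbTE ij.
  (* the null vector (5, 3 e_i + 4 e_j) isolates B i j *)
  have := nullB (5 *: e ord0 + 3 *: e i + 4 *: e j).
  rewrite !(gdotDl, gdotDr, gdotZl, gdotZr, gdot_delta, eta_mx_entry) !eqxx.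
  rewrite i0 j0 ij eq_sym i0 eq_sym j0 eq_sym ij (symBE ord0 i) (symBE ord0 j).
  by rewrite (symBE i j) Bi0 Bj0 Bii Bjj => /(_ ltac:(lra)); lra.
apply/matrixP => i j; rewrite mxE eta_mx_entry.
have [->|i0] := eqVneq i ord0; have [->|j0] := eqVneq j ord0.
- by rewrite mulr1.
- by rewrite mulr0; case: (space0 j j0).
- by rewrite (negbTE i0) mulr0 symBE; case: (space0 i i0).
have [<-|ij] := eqVneq i j; first by rewrite mulrN1; case: (space0 i i0).
by rewrite mulr0 space_offdiag.
Qed.

Section Frame.
Variables (R : realType) (n : nat) (G P : 'M[R]_n.+1).
Hypotheses (symG : G^T = G) (unitP : P \in unitmx)
  (frameP : P^T *m G *m P = eta_mx R n.+1).
Implicit Types (u v x y z : 'rV[R]_n.+1) (M T : 'M[R]_n.+1).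

Definition frame_coord v := v *m invmx P^T.
Definition time_coord v := frame_coord v 0 ord0.

Lemma lorentz_unitmx : G \in unitmx.
Proof.
by have := eta_mx_unit R n; rewrite -frameP !unitmx_mul => /andP[/andP[_ ->]].
Qed.

Lemma gdot_frame_inv a b : gdot G (a *m P^T) (b *m P^T) = gdot (eta_mx R n.+1) a b.
Proof. by rewrite gdot_mulmx trmxK frameP. Qed.

Lemma gdot_frame v w :
  gdot G v w = gdot (eta_mx R n.+1) (frame_coord v) (frame_coord w).
Proof. by rewrite -gdot_frame_inv /frame_coord !mulmxKV ?unitmx_tr. Qed.

Lemma time_coord_comb (a b : R) x y :
  time_coord (a *: x + b *: y) = a * time_coord x + b * time_coord y.
Proof. by rewrite /time_coord /frame_coord mulmxDl -!scalemxAl !mxE. Qed.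

Lemma gdot_time_coord0 z : time_coord z = 0 ->
  gdot G z z = - \sum_(i < n) frame_coord z 0 (lift ord0 i) ^+ 2.
Proof. by move=> z0; rewrite gdot_frame gdot_eta_self -/(time_coord z) z0 expr0n sub0r. Qed.

Lemma time_coord0_gdot_le0 z : time_coord z = 0 -> gdot G z z <= 0.
Proof. by move/gdot_time_coord0->; rewrite oppr_le0 sumr_ge0 // => i _; apply: sqr_ge0. Qed.

Lemma causal_time_coord_neq0 z : z != 0 -> 0 <= gdot G z z -> time_coord z != 0.
Proof.
move=> z_neq0 zz_ge0; apply: contraNneq z_neq0 => z0; apply/eqP.
have /eqP : gdot G z z = 0 by apply/eqP; rewrite eq_le time_coord0_gdot_le0.
rewrite gdot_time_coord0 // oppr_eq0 => /eqP /psumr_eq0P sq0.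
have : frame_coord z = 0.
  apply/rowP => j; rewrite [RHS]mxE; case: (unliftP ord0 j) => [j'|] ->; last exact: z0.
  by apply/eqP; rewrite -sqrf_eq0 sq0 // => i _; apply: sqr_ge0.
have unitPt : P^T \in unitmx by rewrite unitmx_tr.
by move=> z_frame0; rewrite -(mulmxKV unitPt z) -/(frame_coord z) z_frame0 mul0mx.
Qed.

Lemma gdot_time_combination_le0 x y :
  time_coord y ^+ 2 * gdot G x x - 2 * time_coord x * time_coord y * gdot G x y
    + time_coord x ^+ 2 * gdot G y y <= 0.
Proof.
pose z := time_coord y *: x + (- time_coord x) *: y.
have /time_coord0_gdot_le0 : time_coord z = 0 by rewrite time_coord_comb mulrC mulNr addrN.
rewrite !(gdotDl, gdotDr, gdotZl, gdotZr) (gdotC y x symG).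
by move=> h; apply: le_trans h; rewrite le_eqVlt; apply/orP; left; apply/eqP; ring.
Qed.

Lemma timelike_gdot_neq0 x y : 0 < gdot G x x -> 0 < gdot G y y -> gdot G x y != 0.
Proof.
move=> xx_gt0 yy_gt0; apply/eqP => xy0.
have x_neq0 : x != 0 by apply: contraTneq xx_gt0 => ->; rewrite gdot0l ltxx.
have tx_neq0 := causal_time_coord_neq0 x_neq0 (ltW xx_gt0).
have tx2_gt0 : 0 < time_coord x ^+ 2 by rewrite exprn_even_gt0.
have := gdot_time_combination_le0 x y; rewrite xy0.
have := sqr_ge0 (time_coord y); nra.
Qed.

Lemma causal_time_coord_mul_gt0 x y :
  x != 0 -> 0 <= gdot G x x -> 0 < gdot G y y -> 0 < gdot G x y ->
  0 < time_coord x * time_coord y.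
Proof.
move=> x_neq0 xx_ge0 yy_gt0 xy_gt0.
have tx2_gt0 : 0 < time_coord x ^+ 2 by rewrite exprn_even_gt0 ?causal_time_coord_neq0.
have := gdot_time_combination_le0 x y; have := sqr_ge0 (time_coord y); nra.
Qed.

Lemma causal_time_coord_gdot_ge0 x y :
  0 <= gdot G x x -> 0 <= gdot G y y ->
  0 <= time_coord x * time_coord y * gdot G x y.
Proof.
move=> xx_ge0 yy_ge0; have := gdot_time_combination_le0 x y.
have := sqr_ge0 (time_coord x); have := sqr_ge0 (time_coord y); nra.
Qed.

Lemma null_cone_preserving_conformal M :
  nonsingular M -> null_cone_preserving G M ->
  exists2 f : R, f != 0 & M *m G *m M^T = f *: G.
Proof.
move=> detM_neq0 ncpM; pose B := P^T *m (M *m G *m M^T) *m P.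
have symB : B^T = B by rewrite /B !trmx_mul !trmxK symG !mulmxA.
have nullB a : gdot (eta_mx R n.+1) a a = 0 -> gdot B a a = 0.
  move=> aa0; have -> : gdot B a a = gdot G (a *m P^T *m M) (a *m P^T *m M).
    by rewrite -!(mulmxA a) gdot_mulmx /B trmx_mul trmxK !mulmxA.
  have [->|a_neq0] := eqVneq (a *m P^T) 0; first by rewrite mul0mx gdot0l.
  have a_null : null G (a *m P^T) by split; rewrite ?gdot_frame_inv.
  by case: (ncpM _ a_null) => [->|[_ ->]]; rewrite ?gdot0l.
have unitPt : P^T \in unitmx by rewrite unitmx_tr.
have confM : M *m G *m M^T = B ord0 ord0 *: G.
  have Bc := eta_null_form symB nullB; set c := B ord0 ord0 in Bc *.
  have -> : M *m G *m M^T = invmx P^T *m B *m invmx P.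
    by rewrite /B !mulmxA mulVmx // mul1mx mulmxK.
  by rewrite Bc -frameP -scalemxAr -scalemxAl !mulmxA mulVmx // mul1mx mulmxK.
exists (B ord0 ord0) => //; apply: contraNneq detM_neq0 => B00.
move: confM; rewrite B00 scale0r => /(congr1 determinant).
rewrite !det_mulmx det_tr det0 => /eqP; rewrite !mulf_eq0 => /orP[/orP[] |] // detG0.
by move: lorentz_unitmx; rewrite unitmxE unitfE detG0.
Qed.

Lemma conformal_factor_gt0 M (f : R) :
  (2 <= n)%N -> f != 0 -> M *m G *m M^T = f *: G -> 0 < f.
Proof.
move=> n_ge2 f_neq0 confM; rewrite lt_def f_neq0 leNgt; apply/negP => f_lt0.
pose e (i : 'I_n.+1) : 'rV[R]_n.+1 := delta_mx 0 i *m P^T *m M.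
have gdot_e i j : gdot G (e i) (e j) = f * eta_mx R n.+1 i j.
  by rewrite (gdot_conformal _ _ confM) gdot_frame_inv gdot_delta.
(* two distinct spacelike frame vectors would be mapped to orthogonal timelike ones *)
pose i1 : 'I_n.+1 := Ordinal (ltnW n_ge2 : (1 < n.+1)%N).
pose i2 : 'I_n.+1 := Ordinal (n_ge2 : (2 < n.+1)%N).
have := @timelike_gdot_neq0 (e i1) (e i2).
by rewrite !gdot_e !eta_mx_entry !eqxx /= mulr0 eqxx mulrN1 oppr_gt0 f_lt0 => /(_ isT isT).
Qed.

Lemma conformal_time_orientation (tau : 'rV[R]_n.+1) M (f : R) :
  0 < gdot G tau tau -> 0 < f -> M *m G *m M^T = f *: G ->
  exists2 s : R, s != 0 & forall u v,
    future_pointing G tau u -> future_pointing G tau v -> 0 <= s * gdot G (u *m M) v.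
Proof.
move=> tau_gt0 f_gt0 confM.
have unitM := conformal_unitmx lorentz_unitmx (lt0r_neq0 f_gt0) confM.
have MM_gt0 : 0 < gdot G (tau *m M) (tau *m M) by rewrite (gdot_conformal _ _ confM) mulr_gt0.
have nz v : 0 < gdot G v v -> v != 0 by apply: contraTneq => ->; rewrite gdot0l ltxx.
exists (time_coord (tau *m M) * time_coord tau).
  by rewrite mulf_neq0 // causal_time_coord_neq0 ?nz // ltW.
move=> u v [[u_neq0 uu_ge0] utau_gt0] [[v_neq0 vv_ge0] vtau_gt0].
have uM_neq0 : u *m M != 0.
  by apply: contra u_neq0 => /eqP uM0; rewrite -(mulmxK unitM u) uM0 mul0mx.
have uMuM_ge0 : 0 <= gdot G (u *m M) (u *m M).
  by rewrite (gdot_conformal _ _ confM) mulr_ge0 // ltW.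
have uM_tauM : 0 < time_coord (u *m M) * time_coord (tau *m M).
  by rewrite causal_time_coord_mul_gt0 // (gdot_conformal _ _ confM) mulr_gt0 // gdotC.
have v_tau : 0 < time_coord v * time_coord tau.
  by rewrite causal_time_coord_mul_gt0 // gdotC.
set s := time_coord (tau *m M) * time_coord tau.
set a := time_coord (u *m M) * time_coord v.
have sa_gt0 : 0 < s * a.
  rewrite /s /a mulrACA [_ * time_coord (u *m M)]mulrC [time_coord tau * _]mulrC.
  exact: mulr_gt0.
have := causal_time_coord_gdot_ge0 uMuM_ge0 vv_ge0; rewrite -/a; nra.
Qed.

Lemma mixed_DP (tau : 'rV[R]_n.+1) T (f : R) :
  0 < gdot G tau tau -> 0 < f -> T *m invmx G *m T^T = f *: G ->
  DP G tau T \/ DP G tau (- T).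
Proof.
move=> tau_gt0 f_gt0 confT; have unitG := lorentz_unitmx.
have confM : mixed G T *m G *m (mixed G T)^T = f *: G by rewrite mixed_conformal.
have [s s_neq0 orient] := conformal_time_orientation tau_gt0 f_gt0 confM.
have TE u v : (u *m T *m v^T) 0 0 = gdot G (u *m mixed G T) v.
  by rewrite /gdot /mixed !mulmxA mulmxKV.
have [s_gt0|s_le0] := ltrP 0 s.
  by left => u v fu fv; rewrite TE -(pmulr_rge0 _ s_gt0) orient.
have s_lt0 : s < 0 by rewrite lt_neqAle s_neq0.
right => u v fu fv; rewrite mulmxN mulNmx mxE oppr_ge0 TE.
by rewrite -(nmulr_rge0 _ s_lt0) orient.
Qed.
End Frame.

Theorem mainTheorem10 (R : realType) (N : nat) (G : 'M[R]_N)
    (tau : 'rV[R]_N) (T : 'M[R]_N) :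
  (3 <= N)%N -> lorentzian G -> 0 < gdot G tau tau ->
  [/\ (exists f : R, f != 0 /\ T *m invmx G *m T^T = f *: G) <->
        (exists f : R, 0 < f /\ T *m invmx G *m T^T = f *: G
                          /\ T^T *m invmx G *m T = f *: G),
      (exists f : R, 0 < f /\ T *m invmx G *m T^T = f *: G
                        /\ T^T *m invmx G *m T = f *: G) <->
        (nonsingular (mixed G T) /\ null_cone_preserving G (mixed G T))
    & forall f : R, f != 0 -> T *m invmx G *m T^T = f *: G ->
        [/\ bi_preserving G (mixed G T),
            lorentz_transformation G ((Num.sqrt f)^-1 *: mixed G T)
          & DP G tau T \/ DP G tau (- T)]].
Proof.
case: N G tau T => [//|n] G tau T n_ge2 [symG [P [unitP frameP]]] tau_gt0.
have unitG := lorentz_unitmx frameP.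
have mixed_confE f : T *m invmx G *m T^T = f *: G ->
    mixed G T *m G *m (mixed G T)^T = f *: G by rewrite mixed_conformal.
have factor_gt0 f : f != 0 -> T *m invmx G *m T^T = f *: G -> 0 < f.
  by move=> f_neq0 /mixed_confE; apply: (conformal_factor_gt0 symG unitP frameP).
split.
- split=> [[f [f_neq0 confT]] | [f [f_gt0 [confT _]]]].
    by exists f; split; [exact: factor_gt0 | split; last exact: conformal_trmx].
  by exists f; rewrite lt0r_neq0.
- split=> [[f [/lt0r_neq0 f_neq0 [/mixed_confE confM _]]] | [detM ncpM]].
    exact: conformal_null_cone_preserving unitG f_neq0 confM.
  have [f f_neq0] := null_cone_preserving_conformal symG unitP frameP detM ncpM.
  rewrite mixed_conformal // => confT.
  by exists f; split; [exact: factor_gt0 | split; last exact: conformal_trmx].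
move=> f f_neq0 confT; have f_gt0 := factor_gt0 f f_neq0 confT; split.
- exact: mixed_bi_preserving symG unitG f_neq0 confT.
- exact: scaled_lorentz_transformation f_gt0 (mixed_confE f confT).
- by have := mixed_DP symG unitP frameP tau_gt0 f_gt0 confT.
Qed.
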